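(* For all $k,l,m,n,u,v\in\mathbb N$ and all closed terms $P:(k,l)$, $Q:(l,m)$, $R:(m,n)$, $S:(n,u)$, $T:(u,v)$: (i) $(P\mathrel{;}Q)\mathrel{;}R\sim P\mathrel{;}(Q\mathrel{;}R)$; (ii) $P\mathrel{;}\mathsf I_l\sim P\sim \mathsf I_k\mathrel{;}P$; (iii) $(P\otimes R)\otimes T\sim P\otimes(R\otimes T)$; (iv) $(P\otimes S)\mathrel{;}(Q\otimes T)\sim (P\mathrel{;}Q)\otimes(S\mathrel{;}T)$; (v) $(P\otimes R)\mathrel{;}\mathsf X_{l,n}\sim \mathsf X_{k,m}\mathrel{;}(R\otimes P)$; (vi) $\mathsf X_{k,l}\mathrel{;}\mathsf X_{l,k}\sim\mathsf I_{k+l}$. (Each equation is asserted whenever both sides are well-sorted terms.)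
   Context: Wire calculus. Fix a set $\Sigma$ of signals and $\iota\notin\Sigma$; $L=\Sigma\cup\{\iota\}$; $\vec\iota$ denotes a word of $\iota$'s. Prefix strings are words over atoms: signal variables $x$, binders $\lambda x$, $\iota$, constants $\sigma\in\Sigma$. Terms: $P::= Y \mid P\mathrel{;}P\mid P\otimes P\mid \frac{u}{v}.P\mid P+P\mid \mu Y{:}\tau.P$ ($Y$ process variables, $\tau$ a sort $(k,l)$). In $\frac{u}{v}.P$, variables $x$ with $\lambda x$ in $uv$ are bound (set $bd$). Sorting: $Y$ has its declared sort; $P:(k,n),R:(n,l)\Rightarrow P\mathrel{;}R:(k,l)$; $P:(k,l),Q:(m,n)\Rightarrow P\otimes Q:(k+m,l+n)$; $\mu Y{:}\tau'.P:\tau$ if $P:\tau$ assuming $Y{:}\tau'$; $\frac{u}{v}.P:(k,l)$ if $|u|=k,|v|=l$, free variables of $uv$ are in context and disjoint from $bd$, and $P:(k,l)$ with $bd$ added to the context; $P,Q:\tau\Rightarrow P+Q:\tau$. Closed terms only, up to renaming of bound variables; $\otimes$ binds tighter than $;$. Transitions $P\xrightarrow[\vec b]{\vec a}Q$ are generated by: (Refl) $P\xrightarrow[\vec\iota]{\vec\iota}P$; ($\iota$L) $P\xrightarrow[\vec\iota]{\vec\iota}R\xrightarrow[\vec b]{\vec a}Q$ gives $P\xrightarrow[\vec b]{\vec a}Q$; ($\iota$R) $P\xrightarrow[\vec b]{\vec a}R\xrightarrow[\vec\iota]{\vec\iota}Q$ gives $P\xrightarrow[\vec b]{\vec a}Q$;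 (Cut) $P\xrightarrow[\vec c]{\vec a}Q$, $R\xrightarrow[\vec b]{\vec c}S$ give $P\mathrel{;}R\xrightarrow[\vec b]{\vec a}Q\mathrel{;}S$; (Ten) $P\xrightarrow[\vec b]{\vec a}Q$, $R\xrightarrow[\vec d]{\vec c}S$ give $P\otimes R\xrightarrow[\vec b\vec d]{\vec a\vec c}Q\otimes S$; (Pref) for each $\sigma:bd\to L$, $\frac{u}{v}.P\xrightarrow[v|_\sigma]{u|_\sigma}P|_\sigma$ ($\lambda x\mapsto\sigma(x)$ in labels, $x\mapsto\sigma(x)$ in $P$); (Rec) $P[\mu Y.P/Y]\xrightarrow[\vec b]{\vec a}Q$ gives $\mu Y.P\xrightarrow[\vec b]{\vec a}Q$; ($+\iota$) $P\xrightarrow[\vec\iota]{\vec\iota}Q$, $R\xrightarrow[\vec\iota]{\vec\iota}S$ give $P+R\xrightarrow[\vec\iota]{\vec\iota}Q+S$; ($+$L/R) $P\xrightarrow[\vec b]{\vec a}Q$ with $\vec a\vec b$ not all $\iota$ gives $P+R\xrightarrow[\vec b]{\vec a}Q$ and $R+P\xrightarrow[\vec b]{\vec a}Q$. Bisimilarity $\sim$: $P\sim Q$ (same sort) iff some relation $S\ni(P,Q)$ satisfies: if $(P',Q')\in S$ and $P'\xrightarrow[\vec b]{\vec a}P''$ then $Q'\xrightarrow[\vec b]{\vec a}Q''$ for some $Q''$ with $(P'',Q'')\in S$, and symmetrically. Constants: $\mathsf I_k=\mu Y.\frac{\lambda x_1\cdots\lambda x_k}{\lambda x_1\cdots\lambda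 x_k}.Y:(k,k)$ and $\mathsf X_{k,l}=\mu Y.\frac{\lambda x_1\cdots\lambda x_k\lambda y_1\cdots\lambda y_l}{\lambda y_1\cdots\lambda y_l\lambda x_1\cdots\lambda x_k}.Y:(k+l,l+k)$. *)

From mathcomp Require Import all_boot.
Set Implicit Arguments.
Unset Strict Implicit.
Unset Printing Implicit Defensive.

Section Wire.
Variable Sigma : Type.

(* Labels L = Sigma + {iota}; iota is represented by None. *)
Definition label := option Sigma.
Definition iota_l : label := None.
Definition all_iota (w : seq label) : bool := all (fun o => ~~ isSome o) w.

Inductive atom :=
| AVar of nat
| ABind of nat
| AIota
| AConst of Sigma.

Inductive term :=
| PV of nat
| Seq of term & term
| Ten of term & term
| Pref of seq atom & seq atom & term
| Plus of term & term
| Mu of nat & (nat * nat) & term.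

Definition binders (w : seq atom) : seq nat :=
  pmap (fun a => if a is ABind x then Some x else None) w.
Definition vars (w : seq atom) : seq nat :=
  pmap (fun a => if a is AVar x then Some x else None) w.

Definition pctx := nat -> option (nat * nat).
Definition pupd (G : pctx) (Y : nat) (t : nat * nat) : pctx :=
  fun Z => if Z == Y then Some t else G Z.
Definition pempty : pctx := fun _ => None.

Inductive has_sort : pctx -> seq nat -> term -> nat * nat -> Prop :=
| srt_var G D Y t : G Y = Some t -> has_sort G D (PV Y) t
| srt_seq G D P R k n l :
    has_sort G D P (k, n) -> has_sort G D R (n, l) -> has_sort G D (Seq P R) (k, l)
| srt_ten G D P Q k l m n :
    has_sort G D P (k, l) -> has_sort G D Q (m, n) ->
    has_sort G D (Ten P Q) (k + m, l + n)
| srt_mu G D Y P t :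
    has_sort (pupd G Y t) D P t -> has_sort G D (Mu Y t P) t
| srt_pref G D u v P k l :
    size u = k -> size v = l ->
    {subset vars (u ++ v) <= D} ->
    all (fun x => x \notin binders (u ++ v)) (vars (u ++ v)) ->
    has_sort G (binders (u ++ v) ++ D) P (k, l) ->
    has_sort G D (Pref u v P) (k, l)
| srt_plus G D P Q t :
    has_sort G D P t -> has_sort G D Q t -> has_sort G D (Plus P Q) t.

Definition closed_sort (P : term) (t : nat * nat) := has_sort pempty [::] P t.

Fixpoint substP (Y : nat) (N : term) (P : term) : term :=
  match P with
  | PV Z => if Z == Y then N else PV Z
  | Seq P1 P2 => Seq (substP Y N P1) (substP Y N P2)
  | Ten P1 P2 => Ten (substP Y N P1) (substP Y N P2)
  | Pref u v P1 => Pref u v (substP Y N P1)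
  | Plus P1 P2 => Plus (substP Y N P1) (substP Y N P2)
  | Mu Z t P1 => if Z == Y then Mu Z t P1 else Mu Z t (substP Y N P1)
  end.

Definition atom_of_label (o : label) : atom :=
  if o is Some s then AConst s else AIota.

Definition substA (f : nat -> option label) (a : atom) : atom :=
  match a with
  | AVar x => if f x is Some o then atom_of_label o else AVar x
  | _ => a
  end.

Definition restrict (bd : seq nat) (f : nat -> option label) : nat -> option label :=
  fun x => if x \in bd then None else f x.

Fixpoint substS (f : nat -> option label) (P : term) : term :=
  match P with
  | PV Z => PV Z
  | Seq P1 P2 => Seq (substS f P1) (substS f P2)
  | Ten P1 P2 => Ten (substS f P1) (substS f P2)
  | Pref u v P1 =>
      let g := restrict (binders (u ++ v)) f in
      Pref (map (substA f) u) (map (substA f) v) (substS g P1)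
  | Plus P1 P2 => Plus (substS f P1) (substS f P2)
  | Mu Z t P1 => Mu Z t (substS f P1)
  end.

Definition labA (sg : nat -> label) (a : atom) : label :=
  match a with
  | AVar x => sg x
  | ABind x => sg x
  | AIota => None
  | AConst s => Some s
  end.

Definition sgsub (bd : seq nat) (sg : nat -> label) : nat -> option label :=
  fun x => if x \in bd then Some (sg x) else None.

(* step P a b Q  :  P --a/b--> Q  (a: left boundary, b: right boundary). *)
Inductive step : term -> seq label -> seq label -> term -> Prop :=
| st_refl P k l :
    closed_sort P (k, l) -> step P (nseq k iota_l) (nseq l iota_l) P
| st_iotaL P R Q a0 b0 a b :
    all_iota a0 -> all_iota b0 ->
    step P a0 b0 R -> step R a b Q -> step P a b Q
| st_iotaR P R Q a0 b0 a b :
    all_iota a0 -> all_iota b0 ->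
    step P a b R -> step R a0 b0 Q -> step P a b Q
| st_cut P Q R S a b c :
    step P a c Q -> step R c b S -> step (Seq P R) a b (Seq Q S)
| st_ten P Q R S a b c d :
    step P a b Q -> step R c d S -> step (Ten P R) (a ++ c) (b ++ d) (Ten Q S)
| st_pref u v P (sg : nat -> label) :
    step (Pref u v P) (map (labA sg) u) (map (labA sg) v)
         (substS (sgsub (binders (u ++ v)) sg) P)
| st_rec Y t P a b Q :
    step (substP Y (Mu Y t P) P) a b Q -> step (Mu Y t P) a b Q
| st_plusI P Q R S a b :
    all_iota a -> all_iota b ->
    step P a b Q -> step R a b S -> step (Plus P R) a b (Plus Q S)
| st_plusL P R Q a b :
    ~~ all_iota (a ++ b) -> step P a b Q -> step (Plus P R) a b Q
| st_plusR P R Q a b :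
    ~~ all_iota (a ++ b) -> step P a b Q -> step (Plus R P) a b Q.

Definition bisimulation (Rel : term -> term -> Prop) : Prop :=
  forall P Q, Rel P Q ->
    (forall a b P', step P a b P' -> exists2 Q', step Q a b Q' & Rel P' Q') /\
    (forall a b Q', step Q a b Q' -> exists2 P', step P a b P' & Rel P' Q').

Definition bisim (P Q : term) : Prop :=
  (exists t, closed_sort P t /\ closed_sort Q t) /\
  exists Rel, bisimulation Rel /\ Rel P Q.

(* Constants I_k and X_{k,l}: x_i is named i, y_j is named k + j, Y is 0. *)
Definition Id_k (k : nat) : term :=
  Mu 0 (k, k) (Pref (map ABind (iota 0 k)) (map ABind (iota 0 k)) (PV 0)).

Definition Sw (k l : nat) : term :=
  Mu 0 (k + l, l + k)
     (Pref (map ABind (iota 0 k ++ iota k l)) (map ABind (iota k l ++ iota 0 k))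
           (PV 0)).

End Wire.

Arguments PV {Sigma}.
Arguments AIota {Sigma}.
Arguments Id_k {Sigma}.
Arguments Sw {Sigma}.

(* The wire constants I and X are instances of one recursive prefix whose steps are
   exactly the instantiations of its binders, so their behaviour is a relabelling
   of the boundaries.  Each law is then witnessed by an explicit relation pairing
   the two sides component by component.  The difficulty is the iota rules: a step
   of P ; Q is a composite of silent internal communications and one visible cut.
   Matching an outer step is therefore done modulo iota-composition, and where a
   step of an inner composition has to be replayed in another bracketing (both
   associativity directions and the interchange law) one inducts over such
   composites, keeping the remaining components idle during the silent parts. *)

From Pilot Require Import Defs.
From mathcomp Require Import all_boot.
Set Implicit Arguments.
Unset Strict Implicit.
Unset Printing Implicit Defensive.

Section WireCalculus.
Variable Sigma : Type.
Local Notation term := (term Sigma).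
Local Notation label := (label Sigma).
Local Notation iota_l := (@Defs.iota_l Sigma).

Lemma has_sort_Seq_inv G D (P R : term) t :
  has_sort G D (Seq P R) t -> exists n, has_sort G D P (t.1, n) /\ has_sort G D R (n, t.2).
Proof. by move=> H; inversion H; subst; exists n. Qed.

Lemma has_sort_Ten_inv G D (P R : term) t :
  has_sort G D (Ten P R) t -> exists k l m n,
    [/\ t = (k + m, l + n), has_sort G D P (k, l) & has_sort G D R (m, n)].
Proof. by move=> H; inversion H; subst; exists k, l, m, n. Qed.

Lemma has_sort_Mu_inv G D Y t' (P : term) t :
  has_sort G D (Mu Y t' P) t -> t = t' /\ has_sort (pupd G Y t) D P t.
Proof. by move=> H; inversion H; subst. Qed.

Lemma has_sort_Plus_inv G D (P R : term) t :
  has_sort G D (Plus P R) t -> has_sort G D P t /\ has_sort G D R t.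
Proof. by move=> H; inversion H; subst. Qed.

Lemma has_sort_Pref_inv G D u v (P : term) t :
  has_sort G D (Pref u v P) t ->
  t = (size u, size v) /\ has_sort G (binders (u ++ v) ++ D) P t.
Proof. by move=> H; inversion H; subst. Qed.

Lemma has_sort_unique G D D' (P : term) t t' :
  has_sort G D P t -> has_sort G D' P t' -> t = t'.
Proof.
move=> H; elim: H D' t' => {G D P t}.
- by move=> G D Y t HG D' t' H; inversion H; congruence.
- move=> G D P R k n l _ IHP _ IHR D' [k' l'] /has_sort_Seq_inv [n' [HP HR]].
  by case: (IHP _ _ HP) => -> _; case: (IHR _ _ HR) => _ ->.
- move=> G D P Q k l m n _ IHP _ IHQ D' t' /has_sort_Ten_inv [k' [l' [m' [n' [-> HP HQ]]]]].
  by case: (IHP _ _ HP) => -> ->; case: (IHQ _ _ HQ) => -> ->.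
- by move=> G D Y P t _ _ D' t' /has_sort_Mu_inv [->].
- by move=> G D u v P k l <- <- _ _ _ _ D' t' /has_sort_Pref_inv [->].
- by move=> G D P Q t _ IH _ _ D' t' /has_sort_Plus_inv [/IH].
Qed.

Lemma has_sort_weaken G G' D D' (P : term) t :
  (forall Y s, G Y = Some s -> G' Y = Some s) -> {subset D <= D'} ->
  has_sort G D P t -> has_sort G' D' P t.
Proof.
move=> HG HD H; elim: H G' D' HG HD => {G D P t}.
- by move=> G D Y t HY G' D' HG _; constructor; apply: HG.
- by move=> *; apply: srt_seq; eauto.
- by move=> *; apply: srt_ten; eauto.
- move=> G D Y P t _ IH G' D' HG HD; apply/srt_mu/IH => // Z s.
  by rewrite /pupd; case: (Z == Y) => //; apply: HG.
- move=> G D u v P k l Hu Hv Hs Ha _ IH G' D' HG HD; apply: srt_pref => //.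
  + by move=> x /Hs /HD.
  + by apply: IH => // x; rewrite !mem_cat => /orP[->|/HD->] //; rewrite orbT.
- by move=> *; apply: srt_plus; eauto.
Qed.

Lemma has_sort_substP Y (N : term) tN G G0 D P t :
  closed_sort N tN ->
  (forall Z s, G Z = Some s -> if Z == Y then s = tN else G0 Z = Some s) ->
  has_sort G D P t -> has_sort G0 D (substP Y N P) t.
Proof.
move=> HN HG H; elim: H G0 HG => {G D P t}.
- move=> G D Z t HZ G0 HG /=; have := HG _ _ HZ.
  case: (Z == Y) => [->|?]; last by constructor.
  exact: has_sort_weaken HN.
- by move=> *; apply: srt_seq; eauto.
- by move=> *; apply: srt_ten; eauto.
- move=> G D Z P t HP IH G0 HG /=; case: (eqVneq Z Y) => [EZY|neZY]; first subst Z.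
  + apply: srt_mu; apply: has_sort_weaken HP => // W s; rewrite /pupd.
    case: eqVneq => // neWZ HW; by have := HG _ _ HW; rewrite (negbTE neWZ).
  + apply/srt_mu/IH => W s; rewrite /pupd.
    case: eqVneq => [-> [<-]|_ HW]; first by rewrite (negbTE neZY).
    by have := HG _ _ HW; case: (W == Y).
- by move=> G D u v P k l Hu Hv Hs Ha _ IH G0 HG /=; apply: srt_pref => //; apply: IH.
- by move=> *; apply: srt_plus; eauto.
Qed.

Lemma binders_substA f (w : seq (atom Sigma)) : binders (map (substA f) w) = binders w.
Proof.
elim: w => //= a w IH; case: a => [x|x||s]; rewrite /binders /= -/(binders _) ?IH //.
by case: (f x) => [[o|]|].
Qed.

Lemma vars_substA f (w : seq (atom Sigma)) x :
  x \in vars (map (substA f) w) -> x \in vars w /\ f x = None.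
Proof.
elim: w => //= a w IH; case: a => [y|y||s]; rewrite /vars /= -/(vars _) //.
case Ey: (f y) => [[o|]|]; rewrite /= ?in_cons.
- by move/IH=> [-> ->]; rewrite orbT.
- by move/IH=> [-> ->]; rewrite orbT.
- by case/orP=> [/eqP->|/IH [-> ->]]; rewrite ?eqxx ?orbT.
Qed.

Lemma has_sort_substS f G D D' (P : term) t :
  (forall x, x \in D -> f x = None -> x \in D') ->
  has_sort G D P t -> has_sort G D' (substS f P) t.
Proof.
move=> HD H; elim: H f D' HD => {G D P t}.
- by move=> G D Y t HY f D' _; constructor.
- by move=> *; apply: srt_seq; eauto.
- by move=> *; apply: srt_ten; eauto.
- by move=> G D Y P t _ IH f D' HD; apply/srt_mu/IH.
- move=> G D u v P k l Hu Hv Hs Ha _ IH f D' HD /=.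
  have Hvars x : x \in vars (map (substA f) u ++ map (substA f) v) ->
      x \in vars (u ++ v) /\ f x = None by rewrite -map_cat; apply: vars_substA.
  apply: srt_pref; rewrite ?size_map //.
  + by move=> x /Hvars [/Hs /HD]; apply.
  + by apply/allP=> x /Hvars [/(allP Ha)]; rewrite -map_cat binders_substA.
  + rewrite -map_cat binders_substA; apply: IH => x; rewrite /restrict !mem_cat.
    by case: (x \in binders (u ++ v)) => //= /HD H /H.
- by move=> *; apply: srt_plus; eauto.
Qed.

Lemma subject_reduction (P : term) a b Q t :
  step P a b Q -> closed_sort P t -> [/\ closed_sort Q t, size a = t.1 & size b = t.2].
Proof.
move=> S; elim: S t => {P a b Q}.
- by move=> P k l HP t /(has_sort_unique HP) <-; rewrite !size_nseq.
- by move=> P R Q a0 b0 a b _ _ _ IH1 _ IH2 t /IH1 [/IH2].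
- by move=> P R Q a0 b0 a b _ _ _ IH1 _ IH2 t /IH1 [/IH2 [? _ _] -> ->].
- move=> P Q R S a b c _ IH1 _ IH2 [k l] /has_sort_Seq_inv [n [/IH1 [HQ Ea _] /IH2 [HS _ Eb]]].
  by split=> //; apply: srt_seq HQ HS.
- move=> P Q R S a b c d _ IH1 _ IH2 t /has_sort_Ten_inv [k [l [m [n [->]]]]].
  move=> /IH1 [HQ Ea Eb] /IH2 [HS Ec Ed].
  by rewrite !size_cat Ea Eb Ec Ed; split=> //; apply: srt_ten.
- move=> u v P sg t /has_sort_Pref_inv [-> H]; rewrite !size_map; split=> //.
  by apply: has_sort_substS H => x; rewrite cats0 /sgsub => ->.
- move=> Y t P a b Q _ IH t' /[dup] HM /has_sort_Mu_inv [Et H]; subst t'; apply: IH.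
  by apply: (has_sort_substP HM _ H) => Z s; rewrite /pupd; case: eqP => // _ [].
- move=> P Q R S a b _ _ _ IH1 _ IH2 t /has_sort_Plus_inv [/IH1 [HQ Ea Eb] /IH2 [HS _ _]].
  by split=> //; apply: srt_plus.
- by move=> P R Q a b _ _ IH t /has_sort_Plus_inv [/IH].
- by move=> P R Q a b _ _ IH t /has_sort_Plus_inv [_ /IH].
Qed.

Lemma all_iota_nseq n : all_iota (nseq n iota_l).
Proof. by elim: n. Qed.

Lemma all_iota_cat (w1 w2 : seq label) : all_iota w1 -> all_iota w2 -> all_iota (w1 ++ w2).
Proof. by rewrite /all_iota all_cat => -> ->. Qed.

Local Hint Resolve all_iota_nseq all_iota_cat : core.

Lemma all_iota_nseqE (w : seq label) n : all_iota w -> size w = n -> w = nseq n iota_l.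
Proof. by move=> + <-; elim: w => //= [[s|] w IH] //= /IH <-. Qed.

Lemma cat_eq_split T (s1 s2 s3 s4 : seq T) :
  size s1 = size s2 -> s1 ++ s3 = s2 ++ s4 -> s1 = s2 /\ s3 = s4.
Proof.
move=> Es E; have := congr1 (take (size s1)) E; have := congr1 (drop (size s1)) E.
by rewrite {2 4}Es !take_size_cat ?drop_size_cat.
Qed.

Lemma step_Ten_inv (X Y : term) a b W : step (Ten X Y) a b W ->
  exists X' Y' a1 a2 b1 b2, [/\ W = Ten X' Y', a = a1 ++ a2, b = b1 ++ b2,
    step X a1 b1 X' & step Y a2 b2 Y'].
Proof.
move E: (Ten X Y) => A S; elim: S X Y E => {A a b W} //.
- move=> A k l HA X Y EA; subst A.
  have [k1 [l1 [k2 [l2 [[-> ->] HX HY]]]]] := has_sort_Ten_inv HA.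
  exists X, Y, (nseq k1 iota_l), (nseq k2 iota_l), (nseq l1 iota_l), (nseq l2 iota_l).
  by rewrite !nseqD; split=> //; apply: st_refl.
- move=> A R Q a0 b0 a b ia ib _ IH1 _ IH2 X Y EA.
  have [X1 [Y1 [a01 [a02 [b01 [b02 [ER Ea0 Eb0 S1 S2]]]]]]] := IH1 _ _ EA; subst R.
  have [X2 [Y2 [a1 [a2 [b1 [b2 [-> -> -> T1 T2]]]]]]] := IH2 _ _ erefl.
  move: ia ib; rewrite Ea0 Eb0 /all_iota !all_cat => /andP[i1 i2] /andP[j1 j2].
  exists X2, Y2, a1, a2, b1, b2; split=> //.
  - exact: st_iotaL i1 j1 S1 T1.
  - exact: st_iotaL i2 j2 S2 T2.
- move=> A R Q a0 b0 a b ia ib _ IH1 _ IH2 X Y EA.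
  have [X1 [Y1 [a1 [a2 [b1 [b2 [ER -> -> S1 S2]]]]]]] := IH1 _ _ EA; subst R.
  have [X2 [Y2 [a01 [a02 [b01 [b02 [-> Ea0 Eb0 T1 T2]]]]]]] := IH2 _ _ erefl.
  move: ia ib; rewrite Ea0 Eb0 /all_iota !all_cat => /andP[i1 i2] /andP[j1 j2].
  exists X2, Y2, a1, a2, b1, b2; split=> //.
  - exact: st_iotaR i1 j1 S1 T1.
  - exact: st_iotaR i2 j2 S2 T2.
- by move=> P Q R S a b c d S1 _ S2 _ X Y [-> ->]; exists Q, S, a, c, b, d.
Qed.

Definition same_sort (A B : term) := exists t, closed_sort A t /\ closed_sort B t.

Lemma same_sort_sym (A B : term) : same_sort A B -> same_sort B A.
Proof. by case=> t [HA HB]; exists t. Qed.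

Definition simulation (Rel : term -> term -> Prop) :=
  forall A B a b A', Rel A B -> step A a b A' -> exists2 B', step B a b B' & Rel A' B'.

Lemma bisim_of_simulations (Rel : term -> term -> Prop) (P Q : term) :
  simulation Rel -> simulation (fun A B => Rel B A) -> same_sort P Q -> Rel P Q ->
  bisim P Q.
Proof.
move=> fwd bwd PQ HPQ; split=> //; exists Rel; split=> // A B HAB; split=> a b.
- by move=> A'; apply: fwd.
- by move=> B' /(bwd _ _ _ _ _ HAB) [A' SA HA]; exists A'.
Qed.

Inductive head_step : term -> seq label -> seq label -> term -> Prop :=
| hs_cut P Q R S a b c :
    step P a c Q -> step R c b S -> head_step (Seq P R) a b (Seq Q S)
| hs_ten P Q R S a b c d :
    step P a b Q -> step R c d S -> head_step (Ten P R) (a ++ c) (b ++ d) (Ten Q S)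
| hs_pref u v P (sg : nat -> label) :
    head_step (Pref u v P) (map (labA sg) u) (map (labA sg) v)
              (substS (sgsub (binders (u ++ v)) sg) P)
| hs_rec Y t P a b Q :
    step (substP Y (Mu Y t P) P) a b Q -> head_step (Mu Y t P) a b Q
| hs_plusI P Q R S a b :
    all_iota a -> all_iota b -> step P a b Q -> step R a b S ->
    head_step (Plus P R) a b (Plus Q S)
| hs_plusL P R Q a b :
    ~~ all_iota (a ++ b) -> step P a b Q -> head_step (Plus P R) a b Q
| hs_plusR P R Q a b :
    ~~ all_iota (a ++ b) -> step P a b Q -> head_step (Plus R P) a b Q.

Lemma head_step_Seq_inv (P R : term) a b W : head_step (Seq P R) a b W ->
  exists Q S c, [/\ W = Seq Q S, step P a c Q & step R c b S].
Proof. by move=> H; inversion H; subst; exists Q, S, c. Qed.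

(* (Refl) is matched by (Refl) and the iota rules compose on the other side too,
   so only head steps need to be matched. *)
Lemma simulation_up_to_iota (Rel : term -> term -> Prop) :
  (forall A B, Rel A B -> same_sort A B) ->
  (forall A B a b A', Rel A B -> head_step A a b A' -> exists2 B', step B a b B' & Rel A' B') ->
  simulation Rel.
Proof.
move=> Rsort Rhead A B a b A' HR S; elim: S B HR => {A a b A'}.
- move=> A k l HA B HR; exists B => //; apply: st_refl.
  by have [t [/(has_sort_unique HA) -> HB]] := Rsort _ _ HR.
- move=> A R Q a0 b0 a b ia ib _ IH1 _ IH2 B HR.
  have [B1 SB1 /IH2 [B2 SB2 HR2]] := IH1 _ HR.
  by exists B2 => //; apply: st_iotaL SB1 SB2.
- move=> A R Q a0 b0 a b ia ib _ IH1 _ IH2 B HR.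
  have [B1 SB1 /IH2 [B2 SB2 HR2]] := IH1 _ HR.
  by exists B2 => //; apply: st_iotaR SB1 SB2.
- by move=> P Q R S a b c SP _ SR _ B /Rhead; apply; apply: hs_cut SP SR.
- by move=> P Q R S a b c d SP _ SR _ B /Rhead; apply; apply: hs_ten SP SR.
- by move=> u v P sg B /Rhead; apply; apply: hs_pref.
- by move=> Y t P a b Q SP _ B /Rhead; apply; apply: hs_rec SP.
- by move=> P Q R S a b ia ib SP _ SR _ B /Rhead; apply; apply: hs_plusI ia ib SP SR.
- by move=> P R Q a b nab SP _ B /Rhead; apply; apply: hs_plusL nab SP.
- by move=> P R Q a b nab SP _ B /Rhead; apply; apply: hs_plusR nab SP.
Qed.

Section SeqSteps.
Variables (k n l : nat) (Phi : term -> term -> seq label -> seq label -> term -> term -> Prop).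
Hypothesis Phi_cut : forall X Y X' Y' a b c,
  closed_sort X (k, n) -> closed_sort Y (n, l) ->
  step X a c X' -> step Y c b Y' -> Phi X Y a b X' Y'.
Hypothesis Phi_iotaL : forall X Y X1 Y1 X2 Y2 a b,
  Phi X Y (nseq k iota_l) (nseq l iota_l) X1 Y1 -> Phi X1 Y1 a b X2 Y2 -> Phi X Y a b X2 Y2.
Hypothesis Phi_iotaR : forall X Y X1 Y1 X2 Y2 a b,
  Phi X Y a b X1 Y1 -> Phi X1 Y1 (nseq k iota_l) (nseq l iota_l) X2 Y2 -> Phi X Y a b X2 Y2.

(* A step of a sequential composition is a composite of cuts, all but one silent. *)
Lemma seq_step_ind X Y a b W :
  closed_sort X (k, n) -> closed_sort Y (n, l) -> step (Seq X Y) a b W ->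
  exists X' Y', [/\ W = Seq X' Y', closed_sort X' (k, n), closed_sort Y' (n, l) &
    Phi X Y a b X' Y'].
Proof.
move=> + + S; move E: (Seq X Y) S => A S; elim: S X Y E => {A a b W} //.
- move=> A k0 l0 HA X Y EA HX HY; subst A.
  case: (has_sort_unique HA (srt_seq HX HY)) => -> ->.
  by exists X, Y; split=> //; apply: Phi_cut HX HY (st_refl HX) (st_refl HY).
- move=> A R Q a0 b0 a b ia ib SA IH1 _ IH2 X Y EA HX HY; subst A.
  have [_ Ea0 Eb0] := subject_reduction SA (srt_seq HX HY).
  have [X1 [Y1 [ER HX1 HY1 Phi1]]] := IH1 _ _ erefl HX HY; subst R.
  have [X2 [Y2 [-> ? ? Phi2]]] := IH2 _ _ erefl HX1 HY1.
  exists X2, Y2; split=> //; apply: Phi_iotaL Phi2.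
  by rewrite -(all_iota_nseqE ia Ea0) -(all_iota_nseqE ib Eb0).
- move=> A R Q a0 b0 a b ia ib SA IH1 SR IH2 X Y EA HX HY; subst A.
  have [X1 [Y1 [ER HX1 HY1 Phi1]]] := IH1 _ _ erefl HX HY; subst R.
  have [_ Ea0 Eb0] := subject_reduction SR (srt_seq HX1 HY1).
  have [X2 [Y2 [-> ? ? Phi2]]] := IH2 _ _ erefl HX1 HY1.
  exists X2, Y2; split=> //; apply: Phi_iotaR Phi1 _.
  by rewrite -(all_iota_nseqE ia Ea0) -(all_iota_nseqE ib Eb0).
- move=> P Q R S a b c SP _ SR _ X Y [-> ->] HX HY.
  have [HQ _ _] := subject_reduction SP HX; have [HS _ _] := subject_reduction SR HY.
  by exists Q, S; split=> //; apply: Phi_cut SP SR.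
Qed.

End SeqSteps.

(* [Id_k] and [Sw] are instances of [wire]; after one step a wire is in its unfolded form. *)
Definition wire (u v : seq nat) : term :=
  Mu 0 (size u, size v) (Pref (map (@ABind Sigma) u) (map (@ABind Sigma) v) (PV 0)).

Definition wire_state (u v : seq nat) (J : term) :=
  J = wire u v \/ J = Pref (map (@ABind Sigma) u) (map (@ABind Sigma) v) (wire u v).

Lemma binders_ABind (s : seq nat) : binders (map (@ABind Sigma) s) = s.
Proof. by elim: s => //= x s IH; rewrite /binders /= -/(binders _) IH. Qed.

Lemma vars_ABind (s : seq nat) : vars (map (@ABind Sigma) s) = [::].
Proof. by elim: s. Qed.

Lemma substS_wire f u v : substS f (wire u v) = wire u v.
Proof. by rewrite /= -!map_comp. Qed.

Lemma wire_state_sort u v J : wire_state u v J -> closed_sort J (size u, size v).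
Proof.
have prefix G N : has_sort G (u ++ v) N (size u, size v) ->
    has_sort G [::] (Pref (map (@ABind Sigma) u) (map (@ABind Sigma) v) N) (size u, size v).
  move=> HN; apply: srt_pref; rewrite ?size_map -?map_cat ?vars_ABind //.
  by rewrite binders_ABind cats0.
have Hwire : closed_sort (wire u v) (size u, size v).
  by apply/srt_mu/prefix; constructor; rewrite /pupd eqxx.
case=> ->; first exact: Hwire.
by apply/prefix/(has_sort_weaken _ _ Hwire).
Qed.

Lemma wire_state_step_inv u v J a b Q : wire_state u v J -> step J a b Q ->
  exists sg, [/\ a = map sg u, b = map sg v & wire_state u v Q].
Proof.
move=> + S; elim: S => {J a b Q}.
- move=> J k l HJ /[dup] /wire_state_sort /(has_sort_unique HJ) [-> ->] HJ'.
  have const (w : seq nat) : nseq (size w) iota_l = map (fun=> iota_l) w.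
    by elim: w => //= ? ? <-.
  by exists (fun=> iota_l); rewrite !const.
- by move=> J R Q a0 b0 a b _ _ _ IH1 _ IH2 /IH1 [? [_ _ /IH2]].
- move=> J R Q a0 b0 a b _ _ _ IH1 _ IH2 /IH1 [sg [-> -> /IH2 [_ [_ _ HQ]]]].
  by exists sg.
- by move=> P Q R S a b c _ _ _ _ [|].
- by move=> P Q R S a b c d _ _ _ _ [|].
- move=> u' v' P sg [//|[-> -> ->]].
  by exists sg; rewrite substS_wire -!map_comp; split=> //; left.
- by move=> Y t P a b Q _ IH [[EY Et EP]|//]; subst; apply: IH; right.
- by move=> P Q R S a b _ _ _ _ _ _ [|].
- by move=> P R Q a b _ _ _ [|].
- by move=> P R Q a b _ _ _ [|].
Qed.

Lemma wire_state_step u v J (sg : nat -> label) :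
  wire_state u v J -> step J (map sg u) (map sg v) (wire u v).
Proof.
have Hunfolded := st_pref (map (@ABind Sigma) u) (map (@ABind Sigma) v) (wire u v) sg.
rewrite substS_wire -!map_comp in Hunfolded.
by case=> ->; first apply: st_rec.
Qed.

Definition id_state l := wire_state (iota 0 l) (iota 0 l).
Definition swap_state k l := wire_state (iota 0 k ++ iota k l) (iota k l ++ iota 0 k).

Lemma Id_wire l : Id_k l = wire (iota 0 l) (iota 0 l).
Proof. by rewrite /wire size_iota. Qed.

Lemma Sw_wire k l : Sw k l = wire (iota 0 k ++ iota k l) (iota k l ++ iota 0 k).
Proof. by rewrite /wire !size_cat !size_iota. Qed.

Lemma id_state_Id l : id_state l (Id_k l).
Proof. by left; apply: Id_wire. Qed.

Lemma swap_state_Sw k l : swap_state k l (Sw k l).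
Proof. by left; apply: Sw_wire. Qed.

Lemma id_state_sort l J : id_state l J -> closed_sort J (l, l).
Proof. by move/wire_state_sort; rewrite size_iota. Qed.

Lemma swap_state_sort k l J : swap_state k l J -> closed_sort J (k + l, l + k).
Proof. by move/wire_state_sort; rewrite !size_cat !size_iota. Qed.

Lemma id_state_step_inv l J a b Q : id_state l J -> step J a b Q ->
  [/\ a = b, size a = l & id_state l Q].
Proof. by move=> HJ /(wire_state_step_inv HJ) [sg [-> -> HQ]]; rewrite size_map size_iota. Qed.

Lemma id_state_step l J w : id_state l J -> size w = l -> step J w w (Id_k l).
Proof.
move=> HJ Hw; have := wire_state_step (nth iota_l w) HJ.
rewrite Id_wire.
by rewrite -Hw map_nth_iota0 // take_size.
Qed.

Lemma swap_state_step_inv k l J a b Q : swap_state k l J -> step J a b Q ->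
  exists w1 w2, [/\ size w1 = k, size w2 = l, a = w1 ++ w2, b = w2 ++ w1 & swap_state k l Q].
Proof.
move=> HJ /(wire_state_step_inv HJ) [sg [-> -> HQ]].
by exists (map sg (iota 0 k)), (map sg (iota k l)); rewrite !map_cat !size_map !size_iota.
Qed.

Lemma swap_state_step k l J w1 w2 : swap_state k l J -> size w1 = k -> size w2 = l ->
  step J (w1 ++ w2) (w2 ++ w1) (Sw k l).
Proof.
move=> HJ Hw1 Hw2; have := wire_state_step (nth iota_l (w1 ++ w2)) HJ.
rewrite Sw_wire.
rewrite -Hw1 -Hw2 !map_cat map_nth_iota0 ?map_nth_iota ?size_cat ?leq_addr ?addKn //.
by rewrite take_size_cat // drop_size_cat // take_size.
Qed.

Lemma seq_assoc_stepl k n m l (X Y : term) a c W :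
  closed_sort X (k, n) -> closed_sort Y (n, m) -> step (Seq X Y) a c W ->
  exists X' Y', [/\ W = Seq X' Y', closed_sort X' (k, n), closed_sort Y' (n, m) &
    forall Z Z' b, closed_sort Z (m, l) -> step Z c b Z' ->
      step (Seq X (Seq Y Z)) a b (Seq X' (Seq Y' Z'))].
Proof.
move: X Y a c W; apply: (@seq_step_ind k n m (fun X Y a c X' Y' =>
  forall Z Z' b, closed_sort Z (m, l) ->
  step Z c b Z' -> step (Seq X (Seq Y Z)) a b (Seq X' (Seq Y' Z')))).
- by move=> X Y X' Y' a b c _ _ SX SY Z Z' d _ SZ; apply: st_cut SX (st_cut SY SZ).
- move=> X Y X1 Y1 X2 Y2 a c H1 H2 Z Z' b HZ SZ.
  exact: st_iotaL (H1 _ _ _ HZ (st_refl HZ)) (H2 _ _ _ HZ SZ).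
- move=> X Y X1 Y1 X2 Y2 a c H1 H2 Z Z' b HZ SZ.
  have [HZ' _ _] := subject_reduction SZ HZ.
  exact: st_iotaR (H1 _ _ _ HZ SZ) (H2 _ _ _ HZ' (st_refl HZ')).
Qed.

Lemma seq_assoc_stepr k n m l (Y Z : term) c b W :
  closed_sort Y (n, m) -> closed_sort Z (m, l) -> step (Seq Y Z) c b W ->
  exists Y' Z', [/\ W = Seq Y' Z', closed_sort Y' (n, m), closed_sort Z' (m, l) &
    forall X X' a, closed_sort X (k, n) -> step X a c X' ->
      step (Seq (Seq X Y) Z) a b (Seq (Seq X' Y') Z')].
Proof.
move: Y Z c b W; apply: (@seq_step_ind n m l (fun Y Z c b Y' Z' =>
  forall X X' a, closed_sort X (k, n) ->
  step X a c X' -> step (Seq (Seq X Y) Z) a b (Seq (Seq X' Y') Z'))).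
- by move=> Y Z Y' Z' c b d _ _ SY SZ X X' a _ SX; apply: st_cut (st_cut SX SY) SZ.
- move=> Y Z Y1 Z1 Y2 Z2 c b H1 H2 X X' a HX SX.
  exact: st_iotaL (H1 _ _ _ HX (st_refl HX)) (H2 _ _ _ HX SX).
- move=> Y Z Y1 Z1 Y2 Z2 c b H1 H2 X X' a HX SX.
  have [HX' _ _] := subject_reduction SX HX.
  exact: st_iotaR (H1 _ _ _ HX SX) (H2 _ _ _ HX' (st_refl HX')).
Qed.

Variant seq_assoc_rel : term -> term -> Prop :=
  SeqAssocRel X Y Z k n m l :
    closed_sort X (k, n) -> closed_sort Y (n, m) -> closed_sort Z (m, l) ->
    seq_assoc_rel (Seq (Seq X Y) Z) (Seq X (Seq Y Z)).

Lemma seq_assoc_rel_sort A B : seq_assoc_rel A B -> same_sort A B.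
Proof.
case=> X Y Z k n m l HX HY HZ; exists (k, l).
by split; [apply: srt_seq (srt_seq HX HY) HZ | apply: srt_seq HX (srt_seq HY HZ)].
Qed.

Lemma seq_assoc_simulation : simulation seq_assoc_rel.
Proof.
apply: simulation_up_to_iota; first exact: seq_assoc_rel_sort.
move=> _ _ a b A' [X Y Z k n m l HX HY HZ] /head_step_Seq_inv [W [Z' [c [-> SXY SZ]]]].
have [X' [Y' [-> HX' HY' lift]]] := seq_assoc_stepl l HX HY SXY.
have [HZ' _ _] := subject_reduction SZ HZ.
by exists (Seq X' (Seq Y' Z')); [apply: lift | apply: SeqAssocRel HX' HY' HZ'].
Qed.

Lemma seq_assoc_simulation_sym : simulation (fun A B => seq_assoc_rel B A).
Proof.
apply: simulation_up_to_iota => [A B /seq_assoc_rel_sort /same_sort_sym //|].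
move=> _ _ a b A' [X Y Z k n m l HX HY HZ] /head_step_Seq_inv [X' [W [c [-> SX SYZ]]]].
have [Y' [Z' [-> HY' HZ' lift]]] := seq_assoc_stepr k HY HZ SYZ.
have [HX' _ _] := subject_reduction SX HX.
by exists (Seq (Seq X' Y') Z'); [apply: lift | apply: SeqAssocRel HX' HY' HZ'].
Qed.

Lemma bisim_seq_assoc (X Y Z : term) k n m l :
  closed_sort X (k, n) -> closed_sort Y (n, m) -> closed_sort Z (m, l) ->
  bisim (Seq (Seq X Y) Z) (Seq X (Seq Y Z)).
Proof.
move=> HX HY HZ; have HR := SeqAssocRel HX HY HZ.
exact: bisim_of_simulations seq_assoc_simulation seq_assoc_simulation_sym
  (seq_assoc_rel_sort HR) HR.
Qed.

Variant seq_unitr_rel : term -> term -> Prop :=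
  SeqUnitrRel X J k l : closed_sort X (k, l) -> id_state l J -> seq_unitr_rel (Seq X J) X.

Lemma seq_unitr_rel_sort A B : seq_unitr_rel A B -> same_sort A B.
Proof.
by case=> X J k l HX HJ; exists (k, l); split=> //; apply: srt_seq HX (id_state_sort HJ).
Qed.

Lemma seq_unitr_simulation : simulation seq_unitr_rel.
Proof.
apply: simulation_up_to_iota; first exact: seq_unitr_rel_sort.
move=> _ _ a b A' [X J k l HX HJ] /head_step_Seq_inv [X' [J' [c [-> SX SJ]]]].
have [<- _ HJ'] := id_state_step_inv HJ SJ.
have [HX' _ _] := subject_reduction SX HX.
by exists X' => //; apply: SeqUnitrRel HX' HJ'.
Qed.

Lemma seq_unitr_simulation_sym : simulation (fun A B => seq_unitr_rel B A).
Proof.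
move=> _ _ a b X' [X J k l HX HJ] SX.
have [HX' _ Eb] := subject_reduction SX HX.
exists (Seq X' (Id_k l)); first exact: st_cut SX (id_state_step HJ Eb).
exact: SeqUnitrRel HX' (id_state_Id l).
Qed.

Lemma bisim_seq_unitr (X : term) k l : closed_sort X (k, l) -> bisim (Seq X (Id_k l)) X.
Proof.
move=> HX; have HR := SeqUnitrRel HX (id_state_Id l).
exact: bisim_of_simulations seq_unitr_simulation seq_unitr_simulation_sym
  (seq_unitr_rel_sort HR) HR.
Qed.

Variant seq_unitl_rel : term -> term -> Prop :=
  SeqUnitlRel X J k l : closed_sort X (k, l) -> id_state k J -> seq_unitl_rel X (Seq J X).

Lemma seq_unitl_rel_sort A B : seq_unitl_rel A B -> same_sort A B.
Proof.
by case=> X J k l HX HJ; exists (k, l); split=> //; apply: srt_seq (id_state_sort HJ) HX.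
Qed.

Lemma seq_unitl_simulation : simulation seq_unitl_rel.
Proof.
move=> _ _ a b X' [X J k l HX HJ] SX.
have [HX' Ea _] := subject_reduction SX HX.
exists (Seq (Id_k k) X'); first exact: st_cut (id_state_step HJ Ea) SX.
exact: SeqUnitlRel HX' (id_state_Id k).
Qed.

Lemma seq_unitl_simulation_sym : simulation (fun A B => seq_unitl_rel B A).
Proof.
apply: simulation_up_to_iota => [A B /seq_unitl_rel_sort /same_sort_sym //|].
move=> _ _ a b A' [X J k l HX HJ] /head_step_Seq_inv [J' [X' [c [-> SJ SX]]]].
have [-> _ HJ'] := id_state_step_inv HJ SJ.
have [HX' _ _] := subject_reduction SX HX.
by exists X' => //; apply: SeqUnitlRel HX' HJ'.
Qed.

Lemma bisim_seq_unitl (X : term) k l : closed_sort X (k, l) -> bisim X (Seq (Id_k k) X).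
Proof.
move=> HX; have HR := SeqUnitlRel HX (id_state_Id k).
exact: bisim_of_simulations seq_unitl_simulation seq_unitl_simulation_sym
  (seq_unitl_rel_sort HR) HR.
Qed.

Variant ten_assoc_rel : term -> term -> Prop :=
  TenAssocRel X Y Z : ten_assoc_rel (Ten (Ten X Y) Z) (Ten X (Ten Y Z)).

Lemma ten_assoc_simulation : simulation ten_assoc_rel.
Proof.
move=> _ _ a b A' [X Y Z] /step_Ten_inv [XY' [Z' [a12 [a3 [b12 [b3 [-> -> -> SXY SZ]]]]]]].
have [X' [Y' [a1 [a2 [b1 [b2 [-> -> -> SX SY]]]]]]] := step_Ten_inv SXY.
exists (Ten X' (Ten Y' Z')); last exact: TenAssocRel.
by rewrite -!catA; apply: st_ten SX (st_ten SY SZ).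
Qed.

Lemma ten_assoc_simulation_sym : simulation (fun A B => ten_assoc_rel B A).
Proof.
move=> _ _ a b A' [X Y Z] /step_Ten_inv [X' [YZ' [a1 [a23 [b1 [b23 [-> -> -> SX SYZ]]]]]]].
have [Y' [Z' [a2 [a3 [b2 [b3 [-> -> -> SY SZ]]]]]]] := step_Ten_inv SYZ.
exists (Ten (Ten X' Y') Z'); last exact: TenAssocRel.
by rewrite !catA; apply: st_ten (st_ten SX SY) SZ.
Qed.

Lemma bisim_ten_assoc (X Y Z : term) k1 l1 k2 l2 k3 l3 :
  closed_sort X (k1, l1) -> closed_sort Y (k2, l2) -> closed_sort Z (k3, l3) ->
  bisim (Ten (Ten X Y) Z) (Ten X (Ten Y Z)).
Proof.
move=> HX HY HZ; apply: bisim_of_simulations ten_assoc_simulation ten_assoc_simulation_sym _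
  (TenAssocRel X Y Z).
exists (k1 + k2 + k3, l1 + l2 + l3); split; first exact: srt_ten (srt_ten HX HY) HZ.
by rewrite -!addnA; apply: srt_ten HX (srt_ten HY HZ).
Qed.

Lemma seq_ten_stepr k l m n u v (Y V : term) a2 b2 W :
  closed_sort Y (n, u) -> closed_sort V (u, v) -> step (Seq Y V) a2 b2 W ->
  exists Y' V', [/\ W = Seq Y' V', closed_sort Y' (n, u), closed_sort V' (u, v) &
    forall X Z X' Z' a1 c1 b1, closed_sort X (k, l) -> closed_sort Z (l, m) ->
      step X a1 c1 X' -> step Z c1 b1 Z' ->
      step (Seq (Ten X Y) (Ten Z V)) (a1 ++ a2) (b1 ++ b2) (Seq (Ten X' Y') (Ten Z' V'))].
Proof.
move: Y V a2 b2 W; apply: (@seq_step_ind n u v (fun Y V a2 b2 Y' V' =>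
  forall X Z X' Z' a1 c1 b1, closed_sort X (k, l) -> closed_sort Z (l, m) ->
    step X a1 c1 X' -> step Z c1 b1 Z' ->
    step (Seq (Ten X Y) (Ten Z V)) (a1 ++ a2) (b1 ++ b2) (Seq (Ten X' Y') (Ten Z' V')))).
- move=> Y V Y' V' a2 b2 c2 _ _ SY SV X Z X' Z' a1 c1 b1 _ _ SX SZ.
  exact: st_cut (st_ten SX SY) (st_ten SZ SV).
- move=> Y V Y1 V1 Y2 V2 a2 b2 H1 H2 X Z X' Z' a1 c1 b1 HX HZ SX SZ.
  apply: (st_iotaL _ _ (H1 _ _ _ _ _ _ _ HX HZ (st_refl HX) (st_refl HZ))
                       (H2 _ _ _ _ _ _ _ HX HZ SX SZ)); auto.
- move=> Y V Y1 V1 Y2 V2 a2 b2 H1 H2 X Z X' Z' a1 c1 b1 HX HZ SX SZ.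
  have [HX' _ _] := subject_reduction SX HX; have [HZ' _ _] := subject_reduction SZ HZ.
  apply: (st_iotaR _ _ (H1 _ _ _ _ _ _ _ HX HZ SX SZ)
                       (H2 _ _ _ _ _ _ _ HX' HZ' (st_refl HX') (st_refl HZ'))); auto.
Qed.

Lemma seq_ten_stepl k l m n u v (X Z : term) a1 b1 W :
  closed_sort X (k, l) -> closed_sort Z (l, m) -> step (Seq X Z) a1 b1 W ->
  exists X' Z', [/\ W = Seq X' Z', closed_sort X' (k, l), closed_sort Z' (l, m) &
    forall Y V a2 b2 W', closed_sort Y (n, u) -> closed_sort V (u, v) ->
      step (Seq Y V) a2 b2 W' ->
      exists Y' V', [/\ W' = Seq Y' V', closed_sort Y' (n, u), closed_sort V' (u, v) &
        step (Seq (Ten X Y) (Ten Z V)) (a1 ++ a2) (b1 ++ b2) (Seq (Ten X' Y') (Ten Z' V'))]].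
Proof.
move: X Z a1 b1 W; apply: (@seq_step_ind k l m (fun X Z a1 b1 X' Z' =>
  forall Y V a2 b2 W', closed_sort Y (n, u) -> closed_sort V (u, v) ->
    step (Seq Y V) a2 b2 W' ->
    exists Y' V', [/\ W' = Seq Y' V', closed_sort Y' (n, u), closed_sort V' (u, v) &
      step (Seq (Ten X Y) (Ten Z V)) (a1 ++ a2) (b1 ++ b2) (Seq (Ten X' Y') (Ten Z' V'))])).
- move=> X Z X' Z' a1 b1 c1 HX HZ SX SZ Y V a2 b2 W' HY HV SYV.
  have [Y' [V' [-> HY' HV' lift]]] := seq_ten_stepr k l m HY HV SYV.
  by exists Y', V'; split=> //; apply: lift HX HZ SX SZ.
- move=> X Z X1 Z1 X2 Z2 a1 b1 H1 H2 Y V a2 b2 W' HY HV SYV.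
  have [Y1 [V1 [[<- <-] _ _ S1]]] := H1 _ _ _ _ _ HY HV (st_refl (srt_seq HY HV)).
  have [Y' [V' [-> HY' HV' S2]]] := H2 _ _ _ _ _ HY HV SYV.
  by exists Y', V'; split=> //; apply: (st_iotaL _ _ S1 S2); auto.
- move=> X Z X1 Z1 X2 Z2 a1 b1 H1 H2 Y V a2 b2 W' HY HV SYV.
  have [Y' [V' [-> HY' HV' S1]]] := H1 _ _ _ _ _ HY HV SYV.
  have [Y2 [V2 [[<- <-] _ _ S2]]] := H2 _ _ _ _ _ HY' HV' (st_refl (srt_seq HY' HV')).
  by exists Y', V'; split=> //; apply: (st_iotaR _ _ S1 S2); auto.
Qed.

Variant interchange_rel : term -> term -> Prop :=
  InterchangeRel X Y Z V k l m n u v :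
    closed_sort X (k, l) -> closed_sort Z (l, m) ->
    closed_sort Y (n, u) -> closed_sort V (u, v) ->
    interchange_rel (Seq (Ten X Y) (Ten Z V)) (Ten (Seq X Z) (Seq Y V)).

Lemma interchange_rel_sort A B : interchange_rel A B -> same_sort A B.
Proof.
case=> X Y Z V k l m n u v HX HZ HY HV; exists (k + n, m + v); split.
  exact: srt_seq (srt_ten HX HY) (srt_ten HZ HV).
exact: srt_ten (srt_seq HX HZ) (srt_seq HY HV).
Qed.

Lemma interchange_simulation : simulation interchange_rel.
Proof.
apply: simulation_up_to_iota; first exact: interchange_rel_sort.
move=> _ _ a b A' [X Y Z V k l m n u v HX HZ HY HV].
move=> /head_step_Seq_inv [W1 [W2 [c [-> S1 S2]]]].
have [X' [Y' [a1 [a2 [c1 [c2 [-> -> Ec SX SY]]]]]]] := step_Ten_inv S1.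
have [Z' [V' [d1 [d2 [b1 [b2 [-> Ec' -> SZ SV]]]]]]] := step_Ten_inv S2.
have [HX' _ Ec1] := subject_reduction SX HX; have [HZ' Ed1 _] := subject_reduction SZ HZ.
have [HY' _ _] := subject_reduction SY HY; have [HV' _ _] := subject_reduction SV HV.
have [Ed1' Ed2'] := cat_eq_split (etrans Ec1 (esym Ed1)) (etrans (esym Ec) Ec').
subst d1 d2.
exists (Ten (Seq X' Z') (Seq Y' V')); first exact: st_ten (st_cut SX SZ) (st_cut SY SV).
exact: InterchangeRel HX' HZ' HY' HV'.
Qed.

Lemma interchange_simulation_sym : simulation (fun A B => interchange_rel B A).
Proof.
move=> _ _ a b B' [X Y Z V k l m n u v HX HZ HY HV].
move=> /step_Ten_inv [W1 [W2 [a1 [a2 [b1 [b2 [-> -> -> S1 S2]]]]]]].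
have [X' [Z' [-> HX' HZ' lift]]] := seq_ten_stepl n u v HX HZ S1.
have [Y' [V' [-> HY' HV' S]]] := lift _ _ _ _ _ HY HV S2.
by exists (Seq (Ten X' Y') (Ten Z' V')) => //; apply: InterchangeRel HX' HZ' HY' HV'.
Qed.

Lemma bisim_interchange (X Y Z V : term) k l m n u v :
  closed_sort X (k, l) -> closed_sort Z (l, m) ->
  closed_sort Y (n, u) -> closed_sort V (u, v) ->
  bisim (Seq (Ten X Y) (Ten Z V)) (Ten (Seq X Z) (Seq Y V)).
Proof.
move=> HX HZ HY HV; have HR := InterchangeRel HX HZ HY HV.
exact: bisim_of_simulations interchange_simulation interchange_simulation_sym
  (interchange_rel_sort HR) HR.
Qed.

Variant swap_natural_rel : term -> term -> Prop :=
  SwapNaturalRel X Y J J' k l m n :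
    closed_sort X (k, l) -> closed_sort Y (m, n) -> swap_state l n J -> swap_state k m J' ->
    swap_natural_rel (Seq (Ten X Y) J) (Seq J' (Ten Y X)).

Lemma swap_natural_rel_sort A B : swap_natural_rel A B -> same_sort A B.
Proof.
case=> X Y J J' k l m n HX HY HJ HJ'; exists (k + m, n + l); split.
  exact: srt_seq (srt_ten HX HY) (swap_state_sort HJ).
exact: srt_seq (swap_state_sort HJ') (srt_ten HY HX).
Qed.

Lemma swap_natural_simulation : simulation swap_natural_rel.
Proof.
apply: simulation_up_to_iota; first exact: swap_natural_rel_sort.
move=> _ _ a b A' [X Y J J' k l m n HX HY HJ HJ'].
move=> /head_step_Seq_inv [W [J1 [c [-> SXY SJ]]]].
have [X' [Y' [a1 [a2 [c1 [c2 [-> -> Ec SX SY]]]]]]] := step_Ten_inv SXY.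
have [w1 [w2 [Hw1 _ Ec' -> HJ1]]] := swap_state_step_inv HJ SJ.
have [HX' Ea1 Ec1] := subject_reduction SX HX; have [HY' Ea2 _] := subject_reduction SY HY.
have [Ew1 Ew2] := cat_eq_split (etrans Ec1 (esym Hw1)) (etrans (esym Ec) Ec').
subst w1 w2.
exists (Seq (Sw k m) (Ten Y' X')).
  exact: st_cut (swap_state_step HJ' Ea1 Ea2) (st_ten SY SX).
exact: SwapNaturalRel HX' HY' HJ1 (swap_state_Sw k m).
Qed.

Lemma swap_natural_simulation_sym : simulation (fun A B => swap_natural_rel B A).
Proof.
apply: simulation_up_to_iota => [A B /swap_natural_rel_sort /same_sort_sym //|].
move=> _ _ a b A' [X Y J J' k l m n HX HY HJ HJ'].
move=> /head_step_Seq_inv [J1' [W [c [-> SJ' SYX]]]].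
have [w1 [w2 [_ Hw2 -> Ec HJ1']]] := swap_state_step_inv HJ' SJ'.
have [Y' [X' [c1 [c2 [b1 [b2 [-> Ec' -> SY SX]]]]]]] := step_Ten_inv SYX.
have [HY' Ec1 Eb1] := subject_reduction SY HY; have [HX' _ Eb2] := subject_reduction SX HX.
have [Ec1' Ec2'] := cat_eq_split (etrans Hw2 (esym Ec1)) (etrans (esym Ec) Ec').
subst c1 c2.
exists (Seq (Ten X' Y') (Sw l n)).
  exact: st_cut (st_ten SX SY) (swap_state_step HJ Eb2 Eb1).
exact: SwapNaturalRel HX' HY' (swap_state_Sw l n) HJ1'.
Qed.

Lemma bisim_swap_natural (X Y : term) k l m n :
  closed_sort X (k, l) -> closed_sort Y (m, n) ->
  bisim (Seq (Ten X Y) (Sw l n)) (Seq (Sw k m) (Ten Y X)).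
Proof.
move=> HX HY; have HR := SwapNaturalRel HX HY (swap_state_Sw l n) (swap_state_Sw k m).
exact: bisim_of_simulations swap_natural_simulation swap_natural_simulation_sym
  (swap_natural_rel_sort HR) HR.
Qed.

Variant swap_involution_rel : term -> term -> Prop :=
  SwapInvolutionRel J1 J2 J k l :
    swap_state k l J1 -> swap_state l k J2 -> id_state (k + l) J ->
    swap_involution_rel (Seq J1 J2) J.

Lemma swap_involution_rel_sort A B : swap_involution_rel A B -> same_sort A B.
Proof.
case=> J1 J2 J k l HJ1 HJ2 HJ; exists (k + l, k + l); split; last exact: id_state_sort.
exact: srt_seq (swap_state_sort HJ1) (swap_state_sort HJ2).
Qed.

Lemma swap_involution_simulation : simulation swap_involution_rel.
Proof.
apply: simulation_up_to_iota; first exact: swap_involution_rel_sort.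
move=> _ _ a b A' [J1 J2 J k l HJ1 HJ2 HJ] /head_step_Seq_inv [J1' [J2' [c [-> S1 S2]]]].
have [w1 [w2 [Hw1 Hw2 -> Ec HJ1']]] := swap_state_step_inv HJ1 S1.
have [v1 [v2 [Hv1 _ Ec' -> HJ2']]] := swap_state_step_inv HJ2 S2.
have [Ev1 Ev2] := cat_eq_split (etrans Hw2 (esym Hv1)) (etrans (esym Ec) Ec').
subst v1 v2.
have Ha : size (w1 ++ w2) = k + l by rewrite size_cat Hw1 Hw2.
exists (Id_k (k + l)); first exact: id_state_step HJ Ha.
exact: SwapInvolutionRel HJ1' HJ2' (id_state_Id _).
Qed.

Lemma swap_involution_simulation_sym : simulation (fun A B => swap_involution_rel B A).
Proof.
move=> _ _ a b J' [J1 J2 J k l HJ1 HJ2 HJ] SJ.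
have [<- Ea HJ'] := id_state_step_inv HJ SJ.
have Hk : size (take k a) = k by rewrite size_takel // Ea leq_addr.
have Hl : size (drop k a) = l by rewrite size_drop Ea addKn.
exists (Seq (Sw k l) (Sw l k)).
  rewrite -(cat_take_drop k a).
  exact: st_cut (swap_state_step HJ1 Hk Hl) (swap_state_step HJ2 Hl Hk).
exact: SwapInvolutionRel (swap_state_Sw k l) (swap_state_Sw l k) HJ'.
Qed.

Lemma bisim_swap_involution k l : bisim (Seq (Sw k l) (Sw l k)) (Id_k (k + l) : term).
Proof.
have HR := SwapInvolutionRel (swap_state_Sw k l) (swap_state_Sw l k) (id_state_Id (k + l)).
exact: bisim_of_simulations swap_involution_simulation swap_involution_simulation_sym
  (swap_involution_rel_sort HR) HR.
Qed.

End WireCalculus.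

Unset Implicit Arguments.

Theorem mainTheorem3 (Sigma : Type) (k l m n u v : nat)
  (P Q R S T : term Sigma) :
  closed_sort P (k, l) -> closed_sort Q (l, m) -> closed_sort R (m, n) ->
  closed_sort S (n, u) -> closed_sort T (u, v) ->
  (* (i) *)   bisim (Seq (Seq P Q) R) (Seq P (Seq Q R)) /\
  (* (ii) *)  (bisim (Seq P (Id_k l)) P /\ bisim P (Seq (Id_k k) P)) /\
  (* (iii) *) bisim (Ten (Ten P R) T) (Ten P (Ten R T)) /\
  (* (iv) *)  bisim (Seq (Ten P S) (Ten Q T)) (Ten (Seq P Q) (Seq S T)) /\
  (* (v) *)   bisim (Seq (Ten P R) (Sw l n)) (Seq (Sw k m) (Ten R P)) /\
  (* (vi) *)  bisim (Seq (@Sw Sigma k l) (Sw l k)) (Id_k (k + l)).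
Proof.
move=> HP HQ HR HS HT.
split; first exact: bisim_seq_assoc HP HQ HR.
split; first by split; [exact: bisim_seq_unitr HP | exact: bisim_seq_unitl HP].
split; first exact: bisim_ten_assoc HP HR HT.
split; first exact: bisim_interchange HP HQ HS HT.
split; first exact: bisim_swap_natural HP HR.
exact: bisim_swap_involution.
Qed.
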